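(* Let $P$ be a closed program (i.e. all free variables of $P$ have region types $\mathrm{Reg}_rA$ in the typing context) which is typable in the affine-intuitionistic type system with regions (i.e. $R;\Gamma\vdash P:\alpha$ for some $R,\Gamma,\alpha$) and such that there is no $P'$ with $P\to P'$. Then $P$ is structurally equivalent to a program $\nu x_1\cdots\nu x_m\,(M_1\mid\cdots\mid M_n\mid S_1\mid\cdots\mid S_p)$ with $m,n,p\ge 0$, where each $S_j$ is a store item and each $M_i$ is either a value or can be uniquely decomposed as $E[\mathsf{get}(y)]$ for an evaluation context $E$ and an address $y$ such that no value is associated with $y$ in the stores $S_1,\dots,S_p$ (i.e. none of them is $(y\leftarrow V)$ or $(y\Leftarrow V)$).
   Context: Syntax. Variables $x,y,\dots$. Values $V ::= * \mid x \mid \lambda x.M \mid\ !V$. Terms $M ::= V \mid MM \mid\ !M \mid \mathsf{let}\ !x = M\ \mathsf{in}\ M \mid \nu x\,M \mid \mathsf{set}(x,V) \mid \mathsf{pset}(x,V) \mid \mathsf{get}(x) \mid (M\mid M)$. Stores $S ::= (x\leftarrow V) \mid (x \Leftarrow V) \mid (S\mid S)$ (volatile resp. persistent store items). Programs $P ::= M \mid S \mid (P\mid P) \mid \nu x\,P$. The binders $\lambda x$, $\nu x$, $\mathsf{let}\ !x$ bind $x$. Evaluation contexts $E ::= [\,] \mid EM \mid VE \mid\ !E \mid \mathsf{let}\ !x = E\ \mathsf{in}\ M$; static contexts $C ::= [\,] \mid (C\mid P)\mid (P\mid C)\mid \nu x\,C$. Structural equivalence $\equiv$ is the least equivalence on programs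 closed under static contexts and containing $\alpha$-renaming, $P\mid P'\equiv P'\mid P$, $(P\mid P')\mid P''\equiv P\mid(P'\mid P'')$, $(\nu x\,P)\mid P'\equiv \nu x(P\mid P')$ if $x\notin FV(P')$, and $E[\nu x\,M]\equiv \nu x\,E[M]$ if $x\notin FV(E)$. Reduction: $P\to P'$ iff $P\equiv C[\Delta]$ and $P'\equiv C[\Delta']$ for some static context $C$ and basic step $\Delta\to\Delta'$ among: $E[(\lambda x.M)V]\to E[[V/x]M]$; $E[\mathsf{let}\ !x=\,!V\ \mathsf{in}\ M]\to E[[V/x]M]$; $E[\mathsf{set}(x,V)]\to E[*]\mid(x\leftarrow V)$; $E[\mathsf{pset}(x,V)]\to E[*]\mid(x\Leftarrow V)$; $E[\mathsf{get}(x)]\mid(x\leftarrow V)\to E[V]$; $E[\mathsf{get}(x)]\mid(x\Leftarrow\, !V)\to E[!V]\mid(x\Leftarrow\, !V)$. Types. Regions $r,r',\dots$ are each either volatile or persistent. Types $\alpha ::= \mathbf{B}\mid A$, value-types $A ::= \mathbf{1}\mid A\multimap\alpha \mid\ !A\mid \mathrm{Reg}_r A$. Usages: on $\{0,1,\infty\}$ the partial sum $\uplus$ has $a\uplus 0=0\uplus a=a$, $\infty\uplus\infty=\infty$, undefined otherwise. A context is $\Gamma = x_1:(u_1,A_1),\dots,x_n:(u_n,A_n)$ with distinct $x_i$, $u_i\in\{1,\infty\}$. A region usage $U=(v,v')$ (output, input) lies in one of the three sets $\{(\infty,\infty)\}$, $\{(1,\infty),(0,\infty)\}$, $\{(0,0),(1,0),(0,1),(1,1)\}$;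 $U_1\uplus U_2$ is defined iff both lie in the same set and the componentwise sum is defined. A region context is $R=r_1:(U_1,A_1),\dots,r_n:(U_n,A_n)$ with distinct $r_i$. Sums of contexts and of region contexts are componentwise (domains of region contexts implicitly equalized with neutral usages $(\infty,\infty)$, $(0,\infty)$, $(0,0)$). Well-formedness: $R\vdash$ holds iff every region name occurring in the types of $R$ is in $\mathrm{dom}(R)$ and every occurrence of $\mathrm{Reg}_{r_i}B$ in them has $B=A_i$; $R\vdash\alpha$ iff $R\vdash$ and the same conditions hold for $\alpha$; $R\vdash\Gamma$ iff $R\vdash A$ for all $x:(u,A)\in\Gamma$. $\mathrm{aff}(x:(u,A))$ iff $u=1$; $\mathrm{aff}(r:((v,v'),A))$ iff $1\in\{v,v'\}$ or ($r$ volatile and $v'\neq 0$); $\mathrm{aff}(R;\Gamma)$: some hypothesis satisfies $\mathrm{aff}$; $\mathrm{saff}(R;\Gamma)$: all do. Typing rules for $R;\Gamma\vdash P:\alpha$: (var) $R\vdash\Gamma$, $x:(u,A)\in\Gamma$ gives $R;\Gamma\vdash x:A$. (unit) $R\vdash\Gamma$ gives $R;\Gamma\vdash *:\mathbf{1}$. (abs) $R;\Gamma,x:(1,A)\vdash M:\alpha$ gives $R;\Gamma\vdash\lambda x.M:A\multimap\alpha$. (app) $R_1;\Gamma_1\vdash M:A\multimap\alpha$, $R_2;\Gamma_2\vdash N:A$ give $R_1\uplus R_2;\Gamma_1\uplus\Gamma_2\vdash MN:\alpha$. (prom) $R\uplus R'\vdash\Gamma\uplus\Gamma'$, $\mathrm{saff}(R';\Gamma')$,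 $R;\Gamma\vdash M:A$, $\neg\mathrm{aff}(R;\Gamma)$ give $R\uplus R';\Gamma\uplus\Gamma'\vdash\, !M:\,!A$. (let) $R_1;\Gamma_1\vdash M:\,!A$, $R_2;\Gamma_2,x:(\infty,A)\vdash N:\alpha$ give $R_1\uplus R_2;\Gamma_1\uplus\Gamma_2\vdash \mathsf{let}\ !x=M\ \mathsf{in}\ N:\alpha$. (new) $R;\Gamma,x:(u,\mathrm{Reg}_rA)\vdash P:\alpha$ gives $R;\Gamma\vdash\nu x\,P:\alpha$. (get) $R\vdash\Gamma$, $x:(u,\mathrm{Reg}_rA)\in\Gamma$, $r:((v,v'),A)\in R$, $v'\neq0$ give $R;\Gamma\vdash\mathsf{get}(x):A$. (set) $\Gamma=x:(u,\mathrm{Reg}_rA)\uplus\Gamma'$, $r$ volatile, $R=r:((v,v'),A)\uplus R'$, $v\neq0$, $R\vdash\Gamma$, $R';\Gamma'\vdash V:A$ give $R;\Gamma\vdash\mathsf{set}(x,V):\mathbf{1}$ and, with the same premises, $R;\Gamma\vdash(x\leftarrow V):\mathbf{B}$. (pset) $\Gamma=x:(u,\mathrm{Reg}_r!A)\uplus\Gamma'$, $r$ persistent, $R=r:((v,v'),!A)\uplus R'$, $v\neq0$, $R\vdash\Gamma$, $R';\Gamma'\vdash V:\,!A$ give $R;\Gamma\vdash\mathsf{pset}(x,V):\mathbf{1}$ and, with the same premises, $R;\Gamma\vdash(x\Leftarrow V):\mathbf{B}$. (par-store) $R_1;\Gamma_1\vdash P:\alpha$, $R_2;\Gamma_2\vdash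 S:\mathbf{B}$ with $S$ a store give $R_1\uplus R_2;\Gamma_1\uplus\Gamma_2\vdash(P\mid S):\alpha$, likewise $(S\mid P)$. (par) $R_i;\Gamma_i\vdash P_i:\alpha_i$, $P_i$ not a store ($i=1,2$) give $R_1\uplus R_2;\Gamma_1\uplus\Gamma_2\vdash(P_1\mid P_2):\mathbf{B}$. *)

(* Affine-intuitionistic lambda-calculus with regions,
   formalized with de Bruijn indices for the binders lambda x, nu x and
   let !x (so alpha-renaming is syntactic identity). *)
From Stdlib Require Import List Arith PeanoNat Bool.
Import ListNotations.

(* Syntax (raw).  Addresses in set/pset/get/stores are terms; the grammar
   predicates below require them to be variables. *)
Inductive tm : Type :=
  | Unit : tm
  | Var : nat -> tm
  | Lam : tm -> tm
  | Bang : tm -> tm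
  | App : tm -> tm -> tm
  | Let : tm -> tm -> tm            (* let !x = M in N  (x bound in N) *)
  | Nu : tm -> tm
  | SetT : tm -> tm -> tm
  | PSetT : tm -> tm -> tm
  | Get : tm -> tm
  | Par : tm -> tm -> tm
  | Sto : tm -> tm -> tm
  | PSto : tm -> tm -> tm.

Inductive value : tm -> Prop :=
  | v_unit : value Unit
  | v_var : forall x, value (Var x)
  | v_lam : forall M, term M -> value (Lam M)
  | v_bang : forall V, value V -> value (Bang V)
with term : tm -> Prop :=
  | t_val : forall V, value V -> term V
  | t_app : forall M N, term M -> term N -> term (App M N)
  | t_bang : forall M, term M -> term (Bang M)
  | t_let : forall M N, term M -> term N -> term (Let M N)
  | t_nu : forall M, term M -> term (Nu M)
  | t_set : forall x V, value V -> term (SetT (Var x) V)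
  | t_pset : forall x V, value V -> term (PSetT (Var x) V)
  | t_get : forall x, term (Get (Var x))
  | t_par : forall M N, term M -> term N -> term (Par M N).

Inductive store : tm -> Prop :=
  | s_vol : forall x V, value V -> store (Sto (Var x) V)
  | s_pers : forall x V, value V -> store (PSto (Var x) V)
  | s_par : forall S1 S2, store S1 -> store S2 -> store (Par S1 S2).

Definition store_item (S : tm) : Prop :=
  exists x V, value V /\ (S = Sto (Var x) V \/ S = PSto (Var x) V).

Inductive program : tm -> Prop :=
  | p_term : forall M, term M -> program M
  | p_store : forall S, store S -> program S
  | p_par : forall P Q, program P -> program Q -> program (Par P Q)
  | p_nu : forall P, program P -> program (Nu P).

Fixpoint lift (c : nat) (t : tm) : tm :=
  match t with
  | Unit => Unit
  | Var n => if n <? c then Var n else Var (S n)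
  | Lam M => Lam (lift (S c) M)
  | Bang M => Bang (lift c M)
  | App M N => App (lift c M) (lift c N)
  | Let M N => Let (lift c M) (lift (S c) N)
  | Nu M => Nu (lift (S c) M)
  | SetT x V => SetT (lift c x) (lift c V)
  | PSetT x V => PSetT (lift c x) (lift c V)
  | Get x => Get (lift c x)
  | Par M N => Par (lift c M) (lift c N)
  | Sto x V => Sto (lift c x) (lift c V)
  | PSto x V => PSto (lift c x) (lift c V)
  end.

(* subst j s t = [s / j] t, removing variable j (indices above j decrease) *)
Fixpoint subst (j : nat) (s : tm) (t : tm) : tm :=
  match t with
  | Unit => Unit
  | Var n => if n =? j then s else if j <? n then Var (pred n) else Var n
  | Lam M => Lam (subst (S j) (lift 0 s) M)
  | Bang M => Bang (subst j s M)
  | App M N => App (subst j s M) (subst j s N)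
  | Let M N => Let (subst j s M) (subst (S j) (lift 0 s) N)
  | Nu M => Nu (subst (S j) (lift 0 s) M)
  | SetT x V => SetT (subst j s x) (subst j s V)
  | PSetT x V => PSetT (subst j s x) (subst j s V)
  | Get x => Get (subst j s x)
  | Par M N => Par (subst j s M) (subst j s N)
  | Sto x V => Sto (subst j s x) (subst j s V)
  | PSto x V => PSto (subst j s x) (subst j s V)
  end.

(* [V/x]M where x is the variable bound by the enclosing binder *)
Definition subst0 (V M : tm) : tm := subst 0 V M.

Fixpoint occurs_free (n : nat) (t : tm) : Prop :=
  match t with
  | Unit => False
  | Var m => m = n
  | Lam M => occurs_free (S n) M
  | Bang M => occurs_free n M
  | App M N => occurs_free n M \/ occurs_free n N
  | Let M N => occurs_free n M \/ occurs_free (S n) N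
  | Nu M => occurs_free (S n) M
  | SetT x V | PSetT x V | Sto x V | PSto x V =>
      occurs_free n x \/ occurs_free n V
  | Get x => occurs_free n x
  | Par M N => occurs_free n M \/ occurs_free n N
  end.

Inductive ectx : Type :=
  | EHole : ectx
  | EAppL : ectx -> tm -> ectx
  | EAppR : tm -> ectx -> ectx
  | EBang : ectx -> ectx
  | ELet : ectx -> tm -> ectx.

Fixpoint plug (E : ectx) (t : tm) : tm :=
  match E with
  | EHole => t
  | EAppL E M => App (plug E t) M
  | EAppR V E => App V (plug E t)
  | EBang E => Bang (plug E t)
  | ELet E M => Let (plug E t) M
  end.

Fixpoint ectx_ok (E : ectx) : Prop :=
  match E with
  | EHole => True
  | EAppL E M => ectx_ok E /\ term M
  | EAppR V E => value V /\ ectx_ok E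
  | EBang E => ectx_ok E
  | ELet E M => ectx_ok E /\ term M
  end.

(* lifting an evaluation context (the hole is not under a binder) *)
Fixpoint lift_ectx (c : nat) (E : ectx) : ectx :=
  match E with
  | EHole => EHole
  | EAppL E M => EAppL (lift_ectx c E) (lift c M)
  | EAppR V E => EAppR (lift c V) (lift_ectx c E)
  | EBang E => EBang (lift_ectx c E)
  | ELet E M => ELet (lift_ectx c E) (lift (S c) M)
  end.

Inductive sctx : Type :=
  | SHole : sctx
  | SParL : sctx -> tm -> sctx
  | SParR : tm -> sctx -> sctx
  | SNu : sctx -> sctx.

Fixpoint splug (C : sctx) (t : tm) : tm :=
  match C with
  | SHole => t
  | SParL C P => Par (splug C t) P
  | SParR P C => Par P (splug C t)
  | SNu C => Nu (splug C t)
  end.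

(* Structural equivalence (alpha-renaming is identity in de Bruijn;
   side conditions x notin FV(.) are realized by lifting). *)
Inductive steq : tm -> tm -> Prop :=
  | eq_refl : forall P, steq P P
  | eq_sym : forall P Q, steq P Q -> steq Q P
  | eq_trans : forall P Q R, steq P Q -> steq Q R -> steq P R
  | eq_parL : forall P P' Q, steq P P' -> steq (Par P Q) (Par P' Q)
  | eq_parR : forall P Q Q', steq Q Q' -> steq (Par P Q) (Par P Q')
  | eq_nu : forall P P', steq P P' -> steq (Nu P) (Nu P')
  | eq_comm : forall P Q, steq (Par P Q) (Par Q P)
  | eq_assoc : forall P Q R, steq (Par (Par P Q) R) (Par P (Par Q R))
  | eq_extr : forall P Q, steq (Par (Nu P) Q) (Nu (Par P (lift 0 Q)))
  | eq_ectx : forall E M, ectx_ok E ->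
      steq (plug E (Nu M)) (Nu (plug (lift_ectx 0 E) M)).

Inductive basic : tm -> tm -> Prop :=
  | b_beta : forall E M V, ectx_ok E -> value V ->
      basic (plug E (App (Lam M) V)) (plug E (subst0 V M))
  | b_let : forall E M V, ectx_ok E -> value V ->
      basic (plug E (Let (Bang V) M)) (plug E (subst0 V M))
  | b_set : forall E x V, ectx_ok E -> value V ->
      basic (plug E (SetT x V)) (Par (plug E Unit) (Sto x V))
  | b_pset : forall E x V, ectx_ok E -> value V ->
      basic (plug E (PSetT x V)) (Par (plug E Unit) (PSto x V))
  | b_get : forall E x V, ectx_ok E -> value V ->
      basic (Par (plug E (Get x)) (Sto x V)) (plug E V)
  | b_pget : forall E x V, ectx_ok E -> value V ->
      basic (Par (plug E (Get x)) (PSto x (Bang V)))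
            (Par (plug E (Bang V)) (PSto x (Bang V))).

Definition red (P P' : tm) : Prop :=
  exists C D D', basic D D' /\ steq P (splug C D) /\ steq P' (splug C D').

Inductive kind : Type := Volatile | Persistent.
(* a region name, together with its (fixed) kind *)
Definition region : Type := (nat * kind)%type.
Definition kind_eqb (a b : kind) : bool :=
  match a, b with
  | Volatile, Volatile | Persistent, Persistent => true
  | _, _ => false
  end.
Definition region_eqb (r s : region) : bool :=
  Nat.eqb (fst r) (fst s) && kind_eqb (snd r) (snd s).
Definition volatile (r : region) : Prop := snd r = Volatile.
Definition persistent (r : region) : Prop := snd r = Persistent.

Inductive vty : Type :=
  | TUnit : vty
  | TArr : vty -> ty -> vty
  | TBang : vty -> vty
  | TReg : region -> vty -> vty
with ty : Type :=
  | TB : ty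
  | TV : vty -> ty.

Inductive use3 : Type := Z0 | One | Inf.

Inductive usage : Type := U1 | UInf.
Definition usum (a b : usage) : option usage :=
  match a, b with UInf, UInf => Some UInf | _, _ => None end.

(* region usages (v,v'), lying in one of the three sets
   {(oo,oo)}, {(1,oo),(0,oo)}, {(0,0),(1,0),(0,1),(1,1)} *)
Inductive rusage : Type :=
  | RInf : rusage                    (* (oo,oo) *)
  | RHalf : bool -> rusage           (* (v,oo), v = 1 iff true *)
  | RFin : bool -> bool -> rusage.   (* (v,v'), v,v' in {0,1} *)

Definition b2u (b : bool) : use3 := if b then One else Z0.
Definition r_out (U : rusage) : use3 :=
  match U with RInf => Inf | RHalf b => b2u b | RFin o _ => b2u o end.
Definition r_in (U : rusage) : use3 :=
  match U with RInf => Inf | RHalf _ => Inf | RFin _ i => b2u i end.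

Definition rusum (X1 X2 : rusage) : option rusage :=
  match X1, X2 with
  | RInf, RInf => Some RInf
  | RHalf a, RHalf b => if a && b then None else Some (RHalf (a || b))
  | RFin o1 i1, RFin o2 i2 =>
      if (o1 && o2) || (i1 && i2) then None else Some (RFin (o1 || o2) (i1 || i2))
  | _, _ => None
  end.

(* typing contexts: position n = variable of de Bruijn index n;
   None = variable not in the domain *)
Definition ctx : Type := list (option (usage * vty)).
Definition clookup (G : ctx) (n : nat) : option (usage * vty) :=
  match nth_error G n with Some o => o | None => None end.
Definition csingle (x : nat) (e : usage * vty) : ctx := repeat None x ++ [Some e].

Definition osum_c (a b c : option (usage * vty)) : Prop :=
  match a, b with
  | None, None => c = None
  | Some e, None => c = Some e
  | None, Some e => c = Some e
  | Some (u1, A1), Some (u2, A2) =>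
      A1 = A2 /\ exists u, usum u1 u2 = Some u /\ c = Some (u, A1)
  end.
Definition csum (G1 G2 G : ctx) : Prop :=
  forall n, osum_c (clookup G1 n) (clookup G2 n) (clookup G n).

(* region contexts (first binding of a region name counts) *)
Definition rctx : Type := list (region * (rusage * vty)).
Fixpoint rlookup (R : rctx) (r : region) : option (rusage * vty) :=
  match R with
  | [] => None
  | (s, e) :: R' => if region_eqb s r then Some e else rlookup R' r
  end.

Definition osum_r (a b c : option (rusage * vty)) : Prop :=
  match a, b with
  | None, None => c = None
  | Some e, None => c = Some e
  | None, Some e => c = Some e
  | Some (X1, A1), Some (X2, A2) =>
      A1 = A2 /\ exists U, rusum X1 X2 = Some U /\ c = Some (U, A1)
  end.
Definition rsum (R1 R2 R : rctx) : Prop :=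
  forall r, osum_r (rlookup R1 r) (rlookup R2 r) (rlookup R r).

Fixpoint wf_vty (R : rctx) (A : vty) : Prop :=
  match A with
  | TUnit => True
  | TArr A a => wf_vty R A /\ wf_ty R a
  | TBang A => wf_vty R A
  | TReg r B => (exists U, rlookup R r = Some (U, B)) /\ wf_vty R B
  end
with wf_ty (R : rctx) (a : ty) : Prop :=
  match a with
  | TB => True
  | TV A => wf_vty R A
  end.

Definition wf_rctx (R : rctx) : Prop :=
  forall r U A, rlookup R r = Some (U, A) -> wf_vty R A.
Definition wf_ctx (R : rctx) (G : ctx) : Prop :=
  wf_rctx R /\ forall x u A, clookup G x = Some (u, A) -> wf_vty R A.

Definition raff (r : region) (U : rusage) : Prop :=
  r_out U = One \/ r_in U = One \/ (volatile r /\ r_in U <> Z0).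
Definition aff (R : rctx) (G : ctx) : Prop :=
  (exists r U A, rlookup R r = Some (U, A) /\ raff r U) \/
  (exists x A, clookup G x = Some (U1, A)).
Definition saff (R : rctx) (G : ctx) : Prop :=
  (forall r U A, rlookup R r = Some (U, A) -> raff r U) /\
  (forall x u A, clookup G x = Some (u, A) -> u = U1).

Inductive typed : rctx -> ctx -> tm -> ty -> Prop :=
  | ty_var : forall R G x u A,
      wf_ctx R G -> clookup G x = Some (u, A) -> typed R G (Var x) (TV A)
  | ty_unit : forall R G, wf_ctx R G -> typed R G Unit (TV TUnit)
  | ty_abs : forall R G M A a,
      typed R (Some (U1, A) :: G) M a -> typed R G (Lam M) (TV (TArr A a))
  | ty_app : forall R1 R2 R G1 G2 G M N A a,
      typed R1 G1 M (TV (TArr A a)) -> typed R2 G2 N (TV A) ->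
      rsum R1 R2 R -> csum G1 G2 G -> typed R G (App M N) a
  | ty_prom : forall R R' Rs G G' Gs M A,
      rsum R R' Rs -> csum G G' Gs -> wf_ctx Rs Gs -> saff R' G' ->
      typed R G M (TV A) -> ~ aff R G -> typed Rs Gs (Bang M) (TV (TBang A))
  | ty_let : forall R1 R2 R G1 G2 G M N A a,
      typed R1 G1 M (TV (TBang A)) -> typed R2 (Some (UInf, A) :: G2) N a ->
      rsum R1 R2 R -> csum G1 G2 G -> typed R G (Let M N) a
  | ty_new : forall R G P u r A a,
      typed R (Some (u, TReg r A) :: G) P a -> typed R G (Nu P) a
  | ty_get : forall R G x u r A U,
      wf_ctx R G -> clookup G x = Some (u, TReg r A) ->
      rlookup R r = Some (U, A) -> r_in U <> Z0 ->
      typed R G (Get (Var x)) (TV A)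
  | ty_set : forall R R' G G' x u r A U V,
      csum (csingle x (u, TReg r A)) G' G -> volatile r ->
      rsum [(r, (U, A))] R' R -> r_out U <> Z0 -> wf_ctx R G ->
      typed R' G' V (TV A) -> typed R G (SetT (Var x) V) (TV TUnit)
  | ty_sto : forall R R' G G' x u r A U V,
      csum (csingle x (u, TReg r A)) G' G -> volatile r ->
      rsum [(r, (U, A))] R' R -> r_out U <> Z0 -> wf_ctx R G ->
      typed R' G' V (TV A) -> typed R G (Sto (Var x) V) TB
  | ty_pset : forall R R' G G' x u r A U V,
      csum (csingle x (u, TReg r (TBang A))) G' G -> persistent r ->
      rsum [(r, (U, TBang A))] R' R -> r_out U <> Z0 -> wf_ctx R G ->
      typed R' G' V (TV (TBang A)) -> typed R G (PSetT (Var x) V) (TV TUnit)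
  | ty_psto : forall R R' G G' x u r A U V,
      csum (csingle x (u, TReg r (TBang A))) G' G -> persistent r ->
      rsum [(r, (U, TBang A))] R' R -> r_out U <> Z0 -> wf_ctx R G ->
      typed R' G' V (TV (TBang A)) -> typed R G (PSto (Var x) V) TB
  | ty_par_storeR : forall R1 R2 R G1 G2 G P S a,
      typed R1 G1 P a -> typed R2 G2 S TB -> store S ->
      rsum R1 R2 R -> csum G1 G2 G -> typed R G (Par P S) a
  | ty_par_storeL : forall R1 R2 R G1 G2 G P S a,
      typed R1 G1 P a -> typed R2 G2 S TB -> store S ->
      rsum R1 R2 R -> csum G1 G2 G -> typed R G (Par S P) a
  | ty_par : forall R1 R2 R G1 G2 G P1 P2 a1 a2,
      typed R1 G1 P1 a1 -> typed R2 G2 P2 a2 -> ~ store P1 -> ~ store P2 ->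
      rsum R1 R2 R -> csum G1 G2 G -> typed R G (Par P1 P2) TB.

Fixpoint nu_n (m : nat) (P : tm) : tm :=
  match m with 0 => P | S k => Nu (nu_n k P) end.

(* P1 | ... | Pk  (right-nested; only used on nonempty lists) *)
Fixpoint par_list (l : list tm) : tm :=
  match l with
  | [] => Unit
  | [P] => P
  | P :: l' => Par P (par_list l')
  end.

(* Only the shape of the typing derivation matters: since every free variable has
   a region type, a well-typed value of arrow type is an abstraction and one of
   type !A is a promotion, so a beta-, let- or set-redex in evaluation position
   of a well-typed program always fires.  Hence a stuck well-typed term is a
   value, a get blocked in an evaluation context, a parallel composition of
   terms (only at top level, since that has type B), or has a nu in evaluation
   position.  By induction on size, extruding these nu's and flattening the
   parallel compositions gives the normal form; a store item on the address of
   a blocked get would enable a get step. *)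
From Stdlib Require Import List Arith Lia Permutation.
Import ListNotations.

Scheme value_mut := Induction for value Sort Prop
with term_mut := Induction for term Sort Prop.
Combined Scheme value_term_mut from value_mut, term_mut.

Definition lift_index (c x : nat) : nat := if x <? c then x else S x.

Lemma lift_Var c x : lift c (Var x) = Var (lift_index c x).
Proof. unfold lift_index; simpl; destruct (x <? c); reflexivity. Qed.

Lemma lift_value_term :
  (forall V, value V -> forall c, value (lift c V)) /\
  (forall M, term M -> forall c, term (lift c M)).
Proof.
  apply value_term_mut; intros; simpl;
    repeat match goal with |- context [if ?b then _ else _] => destruct b end;
    first [ apply t_app | apply t_bang | apply t_let | apply t_nu | apply t_set
          | apply t_pset | apply t_get | apply t_par | constructor ]; auto.
Qed.

Lemma lift_value V c : value V -> value (lift c V).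
Proof. intros; apply lift_value_term; assumption. Qed.

Lemma lift_term M c : term M -> term (lift c M).
Proof. intros; apply lift_value_term; assumption. Qed.

Lemma lift_store S c : store S -> store (lift c S).
Proof.
  induction 1; simpl;
    repeat match goal with |- context [if ?b then _ else _] => destruct b end;
    constructor; auto using lift_value.
Qed.

Lemma term_not_store M : term M -> ~ store M.
Proof.
  induction 1; intros Hs; inversion Hs; subst; auto.
  all: match goal with Hv : value ?X, _ : store ?X |- _ => inversion Hv end.
Qed.

Lemma plug_lift c E t : lift c (plug E t) = plug (lift_ectx c E) (lift c t).
Proof. induction E; simpl; congruence. Qed.

Lemma ectx_ok_lift c E : ectx_ok E -> ectx_ok (lift_ectx c E).
Proof. induction E; simpl; intuition auto using lift_value, lift_term. Qed.

Lemma term_plug E t : ectx_ok E -> term t -> term (plug E t).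
Proof.
  induction E; simpl; intuition;
    first [apply t_app | apply t_bang | apply t_let]; auto; constructor; auto.
Qed.

Lemma plug_Get_not_value E y : ~ value (plug E (Get y)).
Proof. induction E; simpl; intros H; inversion H; auto. Qed.

Lemma plug_Get_inj E E' y y' : ectx_ok E -> ectx_ok E' ->
  plug E (Get (Var y)) = plug E' (Get (Var y')) -> E' = E /\ y' = y.
Proof.
  revert E'; induction E; intros E' HE HE' Heq; destruct E'; simpl in *;
    try discriminate; injection Heq; intros.
  - subst; auto.
  - destruct (IHE E'); intuition congruence.
  - exfalso; subst; eapply plug_Get_not_value; apply HE'.
  - exfalso; subst; eapply plug_Get_not_value; apply HE.
  - destruct (IHE E'); intuition congruence.
  - destruct (IHE E'); intuition congruence.
  - destruct (IHE E'); intuition congruence.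
Qed.

Fixpoint size (t : tm) : nat :=
  match t with
  | Unit | Var _ => 1
  | Lam M | Bang M | Nu M | Get M => S (size M)
  | App M N | Let M N | SetT M N | PSetT M N | Par M N | Sto M N | PSto M N =>
      S (size M + size N)
  end.

Lemma size_lift c t : size (lift c t) = size t.
Proof.
  revert c; induction t; intros; simpl; auto;
    try (destruct (n <? c); reflexivity); rewrite ?IHt, ?IHt1, ?IHt2; auto.
Qed.

Lemma size_extrude E c M : size (plug (lift_ectx c E) M) < size (plug E (Nu M)).
Proof. induction E; simpl; rewrite ?size_lift; simpl in *; lia. Qed.

Definition env : Type := nat -> option vty.

Definition env_cons (o : option vty) (g : env) : env :=
  fun n => match n with 0 => o | S k => g k end.

(* The typing judgement with usages and region contexts forgotten, keeping only
   what the canonical-form arguments below need. *)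
Inductive shape : env -> tm -> ty -> Prop :=
  | sh_var g x A : g x = Some A -> shape g (Var x) (TV A)
  | sh_unit g : shape g Unit (TV TUnit)
  | sh_lam g M A a : shape g (Lam M) (TV (TArr A a))
  | sh_bang g M A : shape g M (TV A) -> shape g (Bang M) (TV (TBang A))
  | sh_app g M N A a :
      shape g M (TV (TArr A a)) -> shape g N (TV A) -> shape g (App M N) a
  | sh_let g M N A a : shape g M (TV (TBang A)) -> shape g (Let M N) a
  | sh_nu g P r A a : shape (env_cons (Some (TReg r A)) g) P a -> shape g (Nu P) a
  | sh_get g x a : shape g (Get x) a
  | sh_set g x V a : shape g (SetT x V) a
  | sh_pset g x V a : shape g (PSetT x V) a
  | sh_sto g x V a : shape g (Sto x V) a
  | sh_psto g x V A a : shape g V (TV (TBang A)) -> shape g (PSto x V) a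
  | sh_par g P Q a1 a2 a : shape g P a1 -> shape g Q a2 ->
      store P \/ store Q \/ a = TB -> shape g (Par P Q) a.

Definition region_env (g : env) : Prop :=
  forall x A, g x = Some A -> exists r B, A = TReg r B.

Lemma region_env_cons r A g :
  region_env g -> region_env (env_cons (Some (TReg r A)) g).
Proof. intros H [|x] B Hx; simpl in *; [injection Hx as <-|]; eauto. Qed.

Lemma shape_lift g N b : shape g N b ->
  forall c g', (forall n, g' (lift_index c n) = g n) -> shape g' (lift c N) b.
Proof.
  induction 1; intros c g' Hg; simpl;
    try solve [econstructor; eauto; intuition auto using lift_store].
  - rewrite <- Hg in H; unfold lift_index in H.
    destruct (x <? c); constructor; assumption.
  - econstructor; apply IHshape; intros [|n]; [reflexivity|].
    specialize (Hg n); unfold lift_index in *.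
    change (S n <? S c) with (n <? c); destruct (n <? c); assumption.
Qed.

Lemma shape_extrude g E M a : shape g (plug E (Nu M)) a ->
  exists r A, shape (env_cons (Some (TReg r A)) g) (plug (lift_ectx 0 E) M) a.
Proof.
  assert (Hw : forall o N b, shape g N b -> shape (env_cons o g) (lift 0 N) b)
    by (intros; eapply shape_lift; eauto).
  revert a; induction E; intros a H; simpl in *; inversion H; subst; eauto;
    match goal with Hp : shape _ (plug E _) _ |- _ =>
      destruct (IHE _ Hp) as [r [A' HA]] end;
    exists r, A'; econstructor; eauto.
Qed.

Lemma shape_plug g E X a : shape g (plug E X) a ->
  (E = EHole /\ shape g X a) \/ exists A, shape g X (TV A).
Proof.
  revert a; induction E; intros a H; simpl in *; auto; inversion H; subst;
    match goal with H : shape _ (plug E X) _ |- _ =>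
      destruct (IHE _ H) as [[-> ?] | ?]; eauto end.
Qed.

Lemma shape_bang_value g V A : region_env g -> value V ->
  shape g V (TV (TBang A)) -> exists V', V = Bang V' /\ value V'.
Proof.
  intros Hg Hv Hs; inversion Hv; subst; inversion Hs; subst; eauto.
  match goal with Hx : g _ = Some _ |- _ =>
    destruct (Hg _ _ Hx) as [? [? ?]]; discriminate end.
Qed.

Lemma shape_arrow_value g V A a : region_env g -> value V ->
  shape g V (TV (TArr A a)) -> exists M, V = Lam M /\ term M.
Proof.
  intros Hg Hv Hs; inversion Hv; subst; inversion Hs; subst; eauto.
  match goal with Hx : g _ = Some _ |- _ =>
    destruct (Hg _ _ Hx) as [? [? ?]]; discriminate end.
Qed.

Lemma csum_lookup_l G1 G2 G x u A : csum G1 G2 G ->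
  clookup G1 x = Some (u, A) -> exists u', clookup G x = Some (u', A).
Proof.
  intros H H1; specialize (H x); unfold osum_c in H; rewrite H1 in H.
  destruct (clookup G2 x) as [[u2 A2]|]; [destruct H as [_ [? [_ ->]]]|]; eauto.
Qed.

Lemma csum_lookup_r G1 G2 G x u A : csum G1 G2 G ->
  clookup G2 x = Some (u, A) -> exists u', clookup G x = Some (u', A).
Proof.
  intros H H2; specialize (H x); unfold osum_c in H; rewrite H2 in H.
  destruct (clookup G1 x) as [[u1 A1]|]; [destruct H as [-> [? [_ ->]]]|]; eauto.
Qed.

Definition env_agrees (G : ctx) (g : env) (P : tm) : Prop :=
  forall x u A, occurs_free x P -> clookup G x = Some (u, A) -> g x = Some A.

Lemma env_agrees_sub G G' g P Q :
  (forall x u A, clookup G' x = Some (u, A) -> exists u', clookup G x = Some (u', A)) ->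
  (forall x, occurs_free x Q -> occurs_free x P) ->
  env_agrees G g P -> env_agrees G' g Q.
Proof.
  intros HG HQ Hg x u A Hx Hl; destruct (HG _ _ _ Hl) as [u' Hl']; eauto.
Qed.

Local Ltac shape_from_ih :=
  match goal with
  | IH : forall g, env_agrees _ g ?Q -> shape g ?Q _ |- shape _ ?Q _ =>
      apply IH; eapply env_agrees_sub; [| | eassumption];
      [ intros; first [ eapply csum_lookup_l; eassumption
                     | eapply csum_lookup_r; eassumption ]
      | simpl; tauto ]
  | |- _ \/ _ => tauto
  end.

Lemma typed_shape R G P a : typed R G P a ->
  forall g, env_agrees G g P -> shape g P a.
Proof.
  induction 1; intros g Hg; try solve [econstructor; shape_from_ih].
  - constructor; eapply Hg; simpl; eauto.
  - apply sh_nu with (r := r) (A := A); apply IHtyped.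
    intros [|x] u0 A0 Hx Hl; cbn in Hl |- *; [congruence | eapply Hg; eassumption].
Qed.

Lemma steq_nu_n m X Y : steq X Y -> steq (nu_n m X) (nu_n m Y).
Proof. induction m; simpl; auto using eq_nu. Qed.

Lemma nu_n_add m1 m2 X : nu_n m1 (nu_n m2 X) = nu_n (m1 + m2) X.
Proof. induction m1; simpl; congruence. Qed.

Lemma par_list_cons x l : l <> [] -> par_list (x :: l) = Par x (par_list l).
Proof. destruct l; [congruence | reflexivity]. Qed.

Lemma par_list_app l1 l2 : l1 <> [] -> l2 <> [] ->
  steq (par_list (l1 ++ l2)) (Par (par_list l1) (par_list l2)).
Proof.
  intros H1 H2; induction l1 as [|x [|y l1] IH]; [congruence | |].
  { change ([x] ++ l2) with (x :: l2); rewrite par_list_cons by assumption; apply eq_refl. }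
  change ((x :: y :: l1) ++ l2) with (x :: (y :: l1) ++ l2).
  rewrite par_list_cons, (par_list_cons x (y :: l1)) by (simpl; congruence).
  eapply eq_trans; [apply eq_parR, IH; congruence | apply eq_sym, eq_assoc].
Qed.

Lemma Permutation_nonnil {A} (l l' : list A) :
  Permutation l l' -> l <> [] -> l' <> [].
Proof. intros Hp Hl ->; apply Hl, Permutation_nil, Permutation_sym, Hp. Qed.

Lemma steq_par_list_perm l l' : Permutation l l' -> l <> [] ->
  steq (par_list l) (par_list l').
Proof.
  induction 1 as [| x l l' Hp IH | x y l | l l' l'' Hp1 IH1 Hp2 IH2]; intros Hne.
  - apply eq_refl.
  - destruct l as [|y l].
    + apply Permutation_nil in Hp; subst; apply eq_refl.
    + assert (l' <> []) by (eapply Permutation_nonnil; eauto; congruence).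
      rewrite !par_list_cons, (par_list_cons x l') by congruence.
      apply eq_parR, IH; congruence.
  - destruct l as [|z l]; [apply eq_comm |].
    rewrite !par_list_cons by congruence.
    eapply eq_trans; [apply eq_sym, eq_assoc |].
    eapply eq_trans; [apply eq_parL, eq_comm | apply eq_assoc].
  - eapply eq_trans; [apply IH1 | apply IH2]; eauto using Permutation_nonnil.
Qed.

Definition lift_iter (c k : nat) : tm -> tm := Nat.iter k (lift c).

Lemma lift_nu_n c m Y : lift c (nu_n m Y) = nu_n m (lift (m + c) Y).
Proof.
  revert c; induction m; intros c; simpl; [reflexivity |].
  rewrite IHm; do 3 f_equal; lia.
Qed.

Lemma lift_iter_nu_n c k m Y :
  lift_iter c k (nu_n m Y) = nu_n m (lift_iter (m + c) k Y).
Proof. induction k; simpl; [reflexivity |]; rewrite IHk; apply lift_nu_n. Qed.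

Lemma lift_iter_par_list c k l :
  lift_iter c k (par_list l) = par_list (map (lift_iter c k) l).
Proof.
  induction k; simpl.
  - rewrite map_id; reflexivity.
  - rewrite IHk; clear IHk; induction l as [|x [|y l] IH]; simpl in *; congruence.
Qed.

Lemma steq_par_nu_n m X Q :
  steq (Par (nu_n m X) Q) (nu_n m (Par X (lift_iter 0 m Q))).
Proof.
  revert Q; induction m; intros Q; simpl; [apply eq_refl |].
  eapply eq_trans; [apply eq_extr | apply eq_nu].
  unfold lift_iter in *; simpl; rewrite <- Nat.iter_swap; apply IHm.
Qed.

Lemma steq_par_nu_n_nu_n m1 m2 X Y :
  steq (Par (nu_n m1 X) (nu_n m2 Y))
       (nu_n (m1 + m2) (Par (lift_iter 0 m2 X) (lift_iter m2 m1 Y))).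
Proof.
  eapply eq_trans; [apply steq_par_nu_n |].
  rewrite lift_iter_nu_n, Nat.add_0_r, <- nu_n_add; apply steq_nu_n.
  eapply eq_trans; [apply eq_comm |].
  eapply eq_trans; [apply steq_par_nu_n |].
  apply steq_nu_n, eq_comm.
Qed.

Definition inert_thread (M : tm) : Prop :=
  value M \/ exists E y, ectx_ok E /\ M = plug E (Get (Var y)).

(* A persistent item must hold a promoted value for [get] to fire on it. *)
Definition inert_store (S : tm) : Prop :=
  store_item S /\ forall x V, S = PSto x V -> exists V', V = Bang V' /\ value V'.

Definition canonical (P : tm) : Prop :=
  exists m Ms Ss, Ms ++ Ss <> [] /\ Forall inert_store Ss /\ Forall inert_thread Ms /\
    steq P (nu_n m (par_list (Ms ++ Ss))).

Lemma inert_thread_lift c M : inert_thread M -> inert_thread (lift c M).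
Proof.
  intros [H | [E [y [HE ->]]]]; [left; auto using lift_value | right].
  exists (lift_ectx c E), (lift_index c y); split; auto using ectx_ok_lift.
  rewrite plug_lift, <- lift_Var; reflexivity.
Qed.

Lemma inert_store_lift c S : inert_store S -> inert_store (lift c S).
Proof.
  intros [[x [V [HV HS]]] Hp]; split.
  - exists (lift_index c x), (lift c V); rewrite <- lift_Var.
    split; [apply lift_value, HV | destruct HS; subst; auto].
  - intros x0 V0 H; destruct HS as [-> | ->]; [discriminate |].
    injection H as _ <-; destruct (Hp _ _ Logic.eq_refl) as [V' [-> HV']].
    exists (lift c V'); auto using lift_value.
Qed.

Lemma inert_thread_lift_iter c k M : inert_thread M -> inert_thread (lift_iter c k M).
Proof. apply Nat.iter_invariant, inert_thread_lift. Qed.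

Lemma inert_store_lift_iter c k S : inert_store S -> inert_store (lift_iter c k S).
Proof. apply Nat.iter_invariant, inert_store_lift. Qed.

Lemma canonical_steq P Q : steq P Q -> canonical Q -> canonical P.
Proof.
  intros H [m [Ms [Ss [Hn [HS [HM HQ]]]]]].
  exists m, Ms, Ss; repeat split; auto; eapply eq_trans; eauto.
Qed.

Lemma canonical_nu P : canonical P -> canonical (Nu P).
Proof.
  intros [m [Ms [Ss [Hn [HS [HM HP]]]]]].
  exists (S m), Ms, Ss; repeat split; auto; apply eq_nu, HP.
Qed.

Lemma canonical_inert_thread M : inert_thread M -> canonical M.
Proof.
  intros H; exists 0, [M], []; split; [discriminate |].
  split; [constructor | split; [constructor; [assumption | constructor] | apply eq_refl]].
Qed.

Lemma canonical_inert_store S : inert_store S -> canonical S.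
Proof.
  intros H; exists 0, [], [S]; split; [discriminate |].
  split; [constructor; [assumption | constructor] | split; [constructor | apply eq_refl]].
Qed.

Lemma canonical_par P Q : canonical P -> canonical Q -> canonical (Par P Q).
Proof.
  intros [m1 [Ms1 [Ss1 [Hn1 [HS1 [HM1 H1]]]]]] [m2 [Ms2 [Ss2 [Hn2 [HS2 [HM2 H2]]]]]].
  set (f := lift_iter 0 m2); set (h := lift_iter m2 m1).
  exists (m1 + m2), (map f Ms1 ++ map h Ms2), (map f Ss1 ++ map h Ss2).
  assert (Hf : map f (Ms1 ++ Ss1) <> []) by (destruct Ms1, Ss1; simpl in *; congruence).
  assert (Hh : map h (Ms2 ++ Ss2) <> []) by (destruct Ms2, Ss2; simpl in *; congruence).
  assert (Hperm : Permutation (map f (Ms1 ++ Ss1) ++ map h (Ms2 ++ Ss2))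
                    ((map f Ms1 ++ map h Ms2) ++ map f Ss1 ++ map h Ss2)).
  { rewrite !map_app, <- !app_assoc; apply Permutation_app_head.
    rewrite !app_assoc; apply Permutation_app_tail, Permutation_app_comm. }
  split; [| split; [| split]].
  - eapply Permutation_nonnil; [exact Hperm |].
    intros Hc; apply app_eq_nil in Hc; tauto.
  - apply Forall_app; split; apply Forall_map; eapply Forall_impl; eauto;
      intros; apply inert_store_lift_iter; assumption.
  - apply Forall_app; split; apply Forall_map; eapply Forall_impl; eauto;
      intros; apply inert_thread_lift_iter; assumption.
  - eapply eq_trans; [apply eq_parL, H1 |].
    eapply eq_trans; [apply eq_parR, H2 |].
    eapply eq_trans; [apply steq_par_nu_n_nu_n | apply steq_nu_n].
    rewrite !lift_iter_par_list.
    eapply eq_trans; [apply eq_sym, par_list_app; assumption |].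
    apply steq_par_list_perm; [exact Hperm |].
    intros Hc; apply app_eq_nil in Hc; tauto.
Qed.

Definition stuck (P : tm) : Prop := forall P', ~ red P P'.

Fixpoint scomp (C C' : sctx) : sctx :=
  match C with
  | SHole => C'
  | SParL C P => SParL (scomp C C') P
  | SParR P C => SParR P (scomp C C')
  | SNu C => SNu (scomp C C')
  end.

Lemma splug_scomp C C' t : splug C (splug C' t) = splug (scomp C C') t.
Proof. induction C; simpl; congruence. Qed.

Lemma steq_splug C X Y : steq X Y -> steq (splug C X) (splug C Y).
Proof. induction C; simpl; auto using eq_parL, eq_parR, eq_nu. Qed.

Lemma stuck_splug P C Q : stuck P -> steq P (splug C Q) -> stuck Q.
Proof.
  intros HP Heq Q' [C' [D [D' [Hb [H1 H2]]]]].
  apply (HP (splug C Q')); exists (scomp C C'), D, D'; rewrite <- !splug_scomp.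
  split; [exact Hb | split; [eapply eq_trans; [exact Heq |] |]; apply steq_splug; assumption].
Qed.

Fixpoint nu_ctx (m : nat) : sctx :=
  match m with 0 => SHole | S k => SNu (nu_ctx k) end.

Lemma splug_nu_ctx m t : splug (nu_ctx m) t = nu_n m t.
Proof. induction m; simpl; congruence. Qed.

Lemma red_basic D D' : basic D D' -> red D D'.
Proof. intros; exists SHole, D, D'; split; [| split]; auto using eq_refl. Qed.

Definition redex (X : tm) : Prop :=
  (exists V1 V2, X = App V1 V2 /\ value V1 /\ value V2) \/
  (exists V N, X = Let V N /\ value V) \/
  (exists x V, (X = SetT (Var x) V \/ X = PSetT (Var x) V) /\ value V).

Definition eval_head (X : tm) : Prop :=
  redex X \/ (exists y, X = Get (Var y)) \/ (exists M, X = Nu M /\ term M) \/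
  (exists P Q, X = Par P Q /\ term P /\ term Q).

Lemma term_decompose M : term M ->
  value M \/ exists E X, ectx_ok E /\ M = plug E X /\ eval_head X.
Proof.
  unfold eval_head, redex; induction 1 as
    [ V HV | M N HM IHM HN IHN | M HM IHM | M N HM IHM HN IHN | M HM
    | x V HV | x V HV | x | M N HM _ HN _ ]; auto.
  - right; destruct IHM as [HvM | [E [X [HE [-> HX]]]]].
    + destruct IHN as [HvN | [E [X [HE [-> HX]]]]].
      * exists EHole, (App M N); simpl; eauto 10.
      * exists (EAppR M E), X; simpl; auto.
    + exists (EAppL E N), X; simpl; auto.
  - destruct IHM as [HvM | [E [X [HE [-> HX]]]]].
    + left; constructor; assumption.
    + right; exists (EBang E), X; simpl; auto.
  - right; destruct IHM as [HvM | [E [X [HE [-> HX]]]]].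
    + exists EHole, (Let M N); simpl; eauto 10.
    + exists (ELet E N), X; simpl; auto.
  - right; exists EHole, (Nu M); simpl; eauto 10.
  - right; exists EHole, (SetT (Var x) V); simpl; eauto 10.
  - right; exists EHole, (PSetT (Var x) V); simpl; eauto 10.
  - right; exists EHole, (Get (Var x)); simpl; eauto 10.
  - right; exists EHole, (Par M N); simpl; eauto 10.
Qed.

Lemma redex_reduces g E X a : region_env g -> ectx_ok E -> shape g X a ->
  redex X -> exists P', red (plug E X) P'.
Proof.
  intros Hg HE Hs [[V1 [V2 [-> [Hv1 Hv2]]]] | [[V [N [-> Hv]]] | [x [V [[-> | ->] Hv]]]]].
  - inversion Hs; subst.
    destruct (shape_arrow_value _ _ _ _ Hg Hv1 ltac:(eassumption)) as [M [-> _]].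
    eexists; apply red_basic, b_beta; assumption.
  - inversion Hs; subst.
    destruct (shape_bang_value _ _ _ Hg Hv ltac:(eassumption)) as [V' [-> HV']].
    eexists; apply red_basic, b_let; assumption.
  - eexists; apply red_basic, b_set; assumption.
  - eexists; apply red_basic, b_pset; assumption.
Qed.

Lemma stuck_term_cases g M a : term M -> shape g M a -> region_env g -> stuck M ->
  inert_thread M \/
  (exists E N, ectx_ok E /\ term N /\ M = plug E (Nu N)) \/
  (exists P Q, term P /\ term Q /\ M = Par P Q).
Proof.
  intros HM Hs Hg Hst.
  destruct (term_decompose M HM) as [Hv | [E [X [HE [-> HX]]]]]; [left; left; exact Hv |].
  destruct HX as [Hr | [[y ->] | [[N [-> HN]] | [P [Q [-> [HP HQ]]]]]]].
  - exfalso.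
    assert (HX : exists b, shape g X b)
      by (destruct (shape_plug _ _ _ _ Hs) as [[_ ?] | [? ?]]; eauto).
    destruct HX as [b Hb]; destruct (redex_reduces _ _ _ _ Hg HE Hb Hr) as [P' HP'].
    exact (Hst P' HP').
  - left; right; eauto.
  - right; left; eauto.
  - right; right; exists P, Q; split; [exact HP | split; [exact HQ |]].
    destruct (shape_plug _ _ _ _ Hs) as [[-> _] | [A HA]]; [reflexivity | exfalso].
    pose proof (term_not_store _ HP); pose proof (term_not_store _ HQ).
    inversion HA; subst; intuition discriminate.
Qed.

Lemma store_canonical g S a : store S -> shape g S a -> region_env g -> canonical S.
Proof.
  intros HS; revert a; induction HS as [x V HV | x V HV | S1 S2 _ IH1 _ IH2];
    intros a Hs Hg.
  - apply canonical_inert_store; split; [exists x, V; auto | discriminate].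
  - apply canonical_inert_store; split; [exists x, V; auto |].
    intros x0 V0 H; injection H as _ <-; inversion Hs; subst.
    eapply shape_bang_value; eassumption.
  - inversion Hs; subst; apply canonical_par; eauto.
Qed.

Lemma stuck_canonical P g a : program P -> shape g P a -> region_env g ->
  stuck P -> canonical P.
Proof.
  revert g a; induction P as [P IH] using (induction_ltof1 _ size);
    unfold ltof in IH; intros g a Hp Hs Hg Hst.
  destruct Hp as [M HM | S HS | P Q HP HQ | P HP].
  - destruct (stuck_term_cases _ _ _ HM Hs Hg Hst)
      as [Hi | [[E [N [HE [HN ->]]]] | [P [Q [HP [HQ ->]]]]]].
    + apply canonical_inert_thread, Hi.
    + assert (Hext : steq (plug E (Nu N)) (Nu (plug (lift_ectx 0 E) N)))
        by (apply eq_ectx, HE).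
      destruct (shape_extrude _ _ _ _ Hs) as [r [A HsN]].
      apply (canonical_steq _ _ Hext), canonical_nu.
      eapply IH; [apply size_extrude | | exact HsN | |].
      * apply p_term, term_plug; auto using ectx_ok_lift.
      * apply region_env_cons, Hg.
      * exact (stuck_splug _ (SNu SHole) _ Hst Hext).
    + inversion Hs; subst; simpl in IH; apply canonical_par.
      * eapply IH; [lia | apply p_term, HP | eassumption | exact Hg |].
        exact (stuck_splug _ (SParL SHole Q) _ Hst (eq_refl _)).
      * eapply IH; [lia | apply p_term, HQ | eassumption | exact Hg |].
        exact (stuck_splug _ (SParR P SHole) _ Hst (eq_refl _)).
  - eapply store_canonical; eassumption.
  - inversion Hs; subst; simpl in IH; apply canonical_par.
    + eapply IH; [lia | exact HP | eassumption | exact Hg |].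
      exact (stuck_splug _ (SParL SHole Q) _ Hst (eq_refl _)).
    + eapply IH; [lia | exact HQ | eassumption | exact Hg |].
      exact (stuck_splug _ (SParR P SHole) _ Hst (eq_refl _)).
  - inversion Hs; subst; simpl in IH; apply canonical_nu.
    eapply IH; [lia | exact HP | eassumption | apply region_env_cons, Hg |].
    exact (stuck_splug _ (SNu SHole) _ Hst (eq_refl _)).
Qed.

Lemma In_In_Permutation {A} (x y : A) l : In x l -> In y l -> x <> y ->
  exists l', Permutation l (x :: y :: l').
Proof.
  intros Hx Hy Hxy; destruct (in_split _ _ Hx) as [l1 [l2 ->]].
  assert (Hy' : In y (l1 ++ l2)).
  { apply in_app_or in Hy as [Hy | [Hy | Hy]]; auto using in_or_app; congruence. }
  destruct (in_split _ _ Hy') as [k1 [k2 Hk]]; exists (k1 ++ k2).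
  eapply perm_trans; [apply Permutation_sym, Permutation_middle |].
  apply perm_skip; rewrite Hk; apply Permutation_sym, Permutation_middle.
Qed.

Lemma par_list_pair_reduces L M S D' : In M L -> In S L -> M <> S ->
  basic (Par M S) D' -> exists P', red (par_list L) P'.
Proof.
  intros HM HS Hne Hb; destruct (In_In_Permutation _ _ _ HM HS Hne) as [l Hp].
  assert (HL : steq (par_list L) (par_list (M :: S :: l)))
    by (apply steq_par_list_perm; [exact Hp | intros ->; destruct HM]).
  destruct l as [|N l].
  - exists D', SHole, (Par M S), D'; split; [exact Hb | split; [exact HL | apply eq_refl]].
  - exists (splug (SParL SHole (par_list (N :: l))) D'),
      (SParL SHole (par_list (N :: l))), (Par M S), D'.
    split; [exact Hb | split; [| apply eq_refl]].
    eapply eq_trans; [exact HL |].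
    rewrite (par_list_cons M), (par_list_cons S) by discriminate.
    apply eq_sym, eq_assoc.
Qed.

Lemma get_store_basic E y S V : ectx_ok E -> inert_store S ->
  S = Sto (Var y) V \/ S = PSto (Var y) V ->
  exists D', basic (Par (plug E (Get (Var y))) S) D'.
Proof.
  intros HE [[x [V0 [HV0 HS0]]] Hp] [-> | ->].
  - destruct HS0 as [HS0 | HS0]; [injection HS0 as -> -> | discriminate].
    eexists; apply b_get; assumption.
  - destruct (Hp _ _ Logic.eq_refl) as [V' [-> HV']].
    eexists; apply b_pget; assumption.
Qed.

Lemma stuck_get_no_store L E y S : stuck (par_list L) -> ectx_ok E ->
  In (plug E (Get (Var y))) L -> In S L -> inert_store S ->
  forall V, S <> Sto (Var y) V /\ S <> PSto (Var y) V.
Proof.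
  intros Hst HE HM HS HiS V; split; intros HSV.
  all: destruct (get_store_basic E y S V HE HiS ltac:(tauto)) as [D' Hb].
  all: destruct (par_list_pair_reduces _ _ _ _ HM HS ltac:(subst; destruct E; discriminate) Hb)
         as [P' HP'].
  all: exact (Hst P' HP').
Qed.

Definition region_part (G : ctx) : env :=
  fun x => match clookup G x with Some (_, TReg r B) => Some (TReg r B) | _ => None end.

Lemma region_part_region_env G : region_env (region_part G).
Proof.
  intros x A; unfold region_part.
  destruct (clookup G x) as [[u [| | | r B]]|]; try discriminate.
  injection 1 as <-; eauto.
Qed.

Lemma closed_env_agrees G P :
  (forall x, occurs_free x P -> exists u r A, clookup G x = Some (u, TReg r A)) ->
  env_agrees G (region_part G) P.
Proof.
  intros Hcl x u A Hx Hl; destruct (Hcl x Hx) as [u' [r [B Hl']]].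
  unfold region_part; rewrite Hl in Hl' |- *; injection Hl' as _ ->; reflexivity.
Qed.

Theorem mainTheorem4 (P : tm) (R : rctx) (G : ctx) (a : ty) :
  program P ->
  typed R G P a ->
  (forall x, occurs_free x P -> exists u r A, clookup G x = Some (u, TReg r A)) ->
  (forall P', ~ red P P') ->
  exists (m : nat) (Ms Ss : list tm),
    Ms ++ Ss <> [] /\
    Forall store_item Ss /\
    Forall (fun M =>
      value M \/
      exists (E : ectx) (y : nat),
        ectx_ok E /\ M = plug E (Get (Var y)) /\
        (forall (E' : ectx) (y' : nat), ectx_ok E' ->
           M = plug E' (Get (Var y')) -> E' = E /\ y' = y) /\
        Forall (fun S => forall V, S <> Sto (Var y) V /\ S <> PSto (Var y) V) Ss)
      Ms /\
    steq P (nu_n m (par_list (Ms ++ Ss))).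
Proof.
  intros Hp Hty Hcl Hst.
  pose proof (typed_shape _ _ _ _ Hty _ (closed_env_agrees _ _ Hcl)) as Hs.
  destruct (stuck_canonical _ _ _ Hp Hs (region_part_region_env G) Hst)
    as [m [Ms [Ss [Hn [HS [HM Heq]]]]]].
  assert (HL : stuck (par_list (Ms ++ Ss))).
  { apply (stuck_splug _ (nu_ctx m) _ Hst); rewrite splug_nu_ctx; exact Heq. }
  exists m, Ms, Ss; split; [exact Hn | split; [| split; [| exact Heq]]].
  - eapply Forall_impl; [| exact HS]; intros S [HSi _]; exact HSi.
  - rewrite Forall_forall in HM |- *; intros M HinM.
    destruct (HM M HinM) as [Hv | [E [y [HE ->]]]]; [left; exact Hv | right].
    exists E, y; split; [exact HE | split; [reflexivity | split]].
    + intros E' y' HE' Heq'; apply plug_Get_inj; assumption.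
    + rewrite Forall_forall in HS |- *; intros S HinS.
      apply (stuck_get_no_store _ E y S HL HE); auto using in_or_app.
Qed.
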